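(* Let $\{M_p\mid p\in P\}$ be a Morse decomposition of a multivector field on a finite simplicial complex $K$, and let $S$ and $S'$ be the matrices output by ConMat on the filtered boundary matrices $A$ and $A'$ of two Morse fixed admissible enumerations of $K$. Then there exists a permutation matrix $R$ such that $R^{T}SR=S'$.
   Context: $K$ is a finite simplicial complex ($\tau\le\sigma$: $\tau$ is a face of $\sigma$; $\mathrm{cl}(\sigma)=\{\tau:\tau\le\sigma\}$). A multivector field $\mathcal V$ on $K$ is a partition of $K$ into convex sets $V$ (if $\sigma,\tau\in V$ and $\sigma\le\mu\le\tau$ then $\mu\in V$); $[\sigma]_{\mathcal V}$ is the part containing $\sigma$, $F_{\mathcal V}(\sigma)=[\sigma]_{\mathcal V}\cup\mathrm{cl}(\sigma)$, and a path is a sequence $\sigma_1,\dots,\sigma_r$ with $\sigma_k\in F_{\mathcal V}(\sigma_{k-1})$. A Morse decomposition indexed by a finite poset $(P,\le_P)$ is a partition $K=\bigsqcup_{p\in P}M_p$ such that every path from $M_p$ to $M_q$ has $q\le_P p$; $[\sigma]_P$ is the $p$ with $\sigma\in M_p$. An admissible enumeration is $\sigma_1,\dots,\sigma_n$ of all simplices of $K$ such that (a) for some linear extension $\le_{lin}$ of $\le_P$, $i\le j\Rightarrow[\sigma_i]_P\le_{lin}[\sigma_j]_P$; (b) if $\sigma_i$ is a proper face of $\sigma_j$ then $i<j$. Two admissible enumerations are Morse fixed if for every $p$ they induce the same order on $M_p$. The filtered boundary matrix is the $n\times n$ $\mathbb Z_2$-matrix with entry $(i,j)$ equal to $1$ iff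 $\sigma_i$ is a codimension-one face of $\sigma_j$. For a nonzero column $j$ of a matrix $B$, $\mathrm{low}_B(j)$ is the largest $i$ with $B[i,j]=1$. Column (and row) $j$ is homogeneous if nonzero and $\sigma_j$, $\sigma_{\mathrm{low}_B(j)}$ are in the same Morse set; then index $\mathrm{low}_B(j)$ is targetable. $J_h(B)$, $J_t(B)$: sets of homogeneous, targetable indices. Algorithm ConMat on $A$ (in place): for $j=1,\dots,n$: for $i=\mathrm{low}_A(j)$ down to $1$: if $A[i,j]=1$ and some column $s<j$ of the current matrix is homogeneous with $\mathrm{low}_A(s)=i$, add column $s$ to column $j$ (mod 2). With $A_{out}$ the result, let $J=\{1,\dots,n\}\setminus J_h(A_{out})\setminus J_t(A_{out})$; the output is the submatrix of $A_{out}$ on rows and columns in $J$ (in their original order). *)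

From HB Require Import structures.
From mathcomp Require Import all_boot all_algebra.
Set Implicit Arguments. Unset Strict Implicit. Unset Printing Implicit Defensive.
Import GRing.Theory.
Local Open Scope ring_scope.

Definition simplicial_complex (V : finType) (K : {set {set V}}) : Prop :=
  set0 \notin K /\
  forall sigma tau : {set V}, sigma \in K -> tau \subset sigma -> tau != set0 ->
    tau \in K.

Definition cl (V : finType) (K : {set {set V}}) (sigma : {set V}) : {set {set V}} :=
  [set tau in K | tau \subset sigma].

Definition codim1 (V : finType) (tau sigma : {set V}) : bool :=
  (tau \subset sigma) && (#|sigma| == #|tau|.+1).

Definition convex_in (V : finType) (K : {set {set V}}) (A : {set {set V}}) : Prop :=
  forall sigma tau mu : {set V}, sigma \in A -> tau \in A -> mu \in K ->
    sigma \subset mu -> mu \subset tau -> mu \in A.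

Definition multivector_field (V : finType) (K : {set {set V}})
    (mvf : {set {set {set V}}}) : Prop :=
  partition mvf K /\ forall A, A \in mvf -> convex_in K A.

Definition Fmv (V : finType) (K : {set {set V}}) (mvf : {set {set {set V}}})
    (sigma : {set V}) : {set {set V}} :=
  pblock mvf sigma :|: cl K sigma.

Definition mv_path (V : finType) (K : {set {set V}}) (mvf : {set {set {set V}}})
    (x : {set V}) (p : seq {set V}) : Prop :=
  all (fun s => s \in K) (x :: p) /\ path (fun a b => b \in Fmv K mvf a) x p.

Definition partial_order (P : finType) (le : rel P) : Prop :=
  reflexive le /\ antisymmetric le /\ transitive le.

Definition linear_extension (P : finType) (le lin : rel P) : Prop :=
  partial_order lin /\ total lin /\ (forall p q, le p q -> lin p q).

(** * Morse decompositions, indexed by (P, leP); the Morse set M_p is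
    [set sigma in K | mset sigma == p]. *)
Definition morse_decomposition (V : finType) (K : {set {set V}})
    (mvf : {set {set {set V}}}) (P : finType) (leP : rel P)
    (mset : {set V} -> P) : Prop :=
  partial_order leP /\
  forall (x : {set V}) (p : seq {set V}), mv_path K mvf x p ->
    leP (mset (last x p)) (mset x).

(** * Admissible enumerations: s = [:: sigma_1; ...; sigma_n] (0-indexed here) *)
Definition enumeration (V : finType) (K : {set {set V}}) (s : seq {set V}) : Prop :=
  uniq s /\ s =i K.

Definition admissible (V : finType) (K : {set {set V}}) (P : finType) (leP : rel P)
    (mset : {set V} -> P) (s : seq {set V}) : Prop :=
  enumeration K s /\
  (exists lin : rel P, linear_extension leP lin /\
     forall i j, i <= j -> j < size s ->
       lin (mset (nth set0 s i)) (mset (nth set0 s j)))%N /\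
  (forall i j, i < size s -> j < size s ->
     nth set0 s i \proper nth set0 s j -> i < j)%N.

Definition morse_fixed (V : finType) (P : finType) (mset : {set V} -> P)
    (s s' : seq {set V}) : Prop :=
  forall p : P, [seq x <- s | mset x == p] = [seq x <- s' | mset x == p].

Definition bdry_mx (V : finType) (s : seq {set V}) : 'M['F_2]_(size s) :=
  \matrix_(i, j) (if codim1 (nth set0 s i) (nth set0 s j) then 1 else 0).

(** * The ConMat algorithm, for an n x n matrix, with Morse labels
    lab i = index of the Morse set containing sigma_i (0-indexed). *)
Section ConMat.
Variables (n : nat) (P : eqType) (lab : nat -> P).

Definition nzcol (B : 'M['F_2]_n) (j : 'I_n) : bool := [exists i, B i j != 0].

(** low_B(j): largest row index with a nonzero entry (only meaningful when
    column j is nonzero) *)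
Definition low (B : 'M['F_2]_n) (j : 'I_n) : nat := \max_(i < n | B i j != 0%R) (i : nat).

Definition homogeneous (B : 'M['F_2]_n) (j : 'I_n) : bool :=
  nzcol B j && (lab j == lab (low B j)).

Definition targetable (B : 'M['F_2]_n) (i : 'I_n) : bool :=
  [exists j, homogeneous B j && (low B j == i)].

Definition addcol (B : 'M['F_2]_n) (s j : 'I_n) : 'M['F_2]_n :=
  \matrix_(a, b) (if b == j then B a j + B a s else B a b).

Definition step (B : 'M['F_2]_n) (j i : 'I_n) : 'M['F_2]_n :=
  if B i j != 0 then
    match [pick s : 'I_n | (s < j)%N && homogeneous B s && (low B s == i)] with
    | Some s => addcol B s j
    | None => B
    end
  else B.

Definition process_col (B : 'M['F_2]_n) (j : 'I_n) : 'M['F_2]_n :=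
  foldl (fun B' i => step B' j i) B (rev [seq i : 'I_n <- enum 'I_n | (nat_of_ord i <= low B j)%N]).

Definition conmat_full (A : 'M['F_2]_n) : 'M['F_2]_n :=
  foldl process_col A (enum 'I_n).

Definition conmat_J (A : 'M['F_2]_n) : {set 'I_n} :=
  [set i | ~~ homogeneous (conmat_full A) i && ~~ targetable (conmat_full A) i].

Definition conmat (A : 'M['F_2]_n) : 'M['F_2]_(#|conmat_J A|) :=
  \matrix_(a, b) conmat_full A (enum_val a) (enum_val b).

End ConMat.

Definition labels (V : finType) (P : finType) (mset : {set V} -> P)
    (s : seq {set V}) : nat -> P := fun i => mset (nth set0 s i).

(** A (not necessarily a priori square) permutation matrix: every row and
    every column contains exactly one nonzero (= 1) entry. *)
Definition perm_matrix (m m' : nat) (R : 'M['F_2]_(m, m')) : bool :=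
  [forall i, #|[set j | R i j != 0]| == 1%N] &&
  [forall j, #|[set i | R i j != 0]| == 1%N].

(** The output of ConMat on a filtered matrix A is characterized by A alone: it is
    the unique matrix whose columns are filtered, each column being the column of A
    plus a combination of earlier homogeneous "pivot" columns of the output, with no
    nonzero entry at the low of one of these pivots.  Uniqueness holds because
    pivots have pairwise distinct lows, so a nonzero combination of them is nonzero
    at the largest of these lows.

    Two Morse fixed admissible enumerations differ by a bijection that preserves
    the order inside each Morse set and, both being sorted along linear extensions
    of the Morse order, the order of simplices in distinct comparable Morse sets.
    Transporting the output for one enumeration along this bijection therefore
    gives a matrix with the characterizing properties for the other one, so the two
    outputs, and their surviving index sets J, agree up to simultaneous permutation
    of rows and columns. *)

From mathcomp Require Import all_boot all_algebra.
Set Implicit Arguments. Unset Strict Implicit. Unset Printing Implicit Defensive.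
Import GRing.Theory.
Local Open Scope ring_scope.

Lemma F2_eq1 (x : 'F_2) : x != 0 -> x = 1.
Proof. by case: x => [[|[|]]] //= ? ?; apply/eqP. Qed.

Lemma filter_iota_leq m n : (m < n)%N -> [seq k <- iota 0 n | (k <= m)%N] = iota 0 m.+1.
Proof.
move=> ltmn; rewrite -(subnKC ltmn) iotaD filter_cat.
rewrite (eq_in_filter (a2 := predT)) ?filter_predT; last by move=> k; rewrite mem_iota.
rewrite (eq_in_filter (a2 := pred0)) ?filter_pred0 ?cats0 //.
by move=> k; rewrite mem_iota add0n /= => /andP[ltmk _]; rewrite leqNgt ltmk.
Qed.

Section Reduction.
Variables (P : eqType) (leP : rel P) (n : nat) (lab : nat -> P).
Implicit Types (A B C F G : 'M['F_2]_n) (i j s t : 'I_n).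

Lemma leq_low B i j : B i j != 0 -> (i <= low B j)%N.
Proof. exact: (leq_bigmax_cond (F := fun i : 'I_n => nat_of_ord i)). Qed.

Lemma nzcol_low B j : nzcol B j -> exists2 l : 'I_n, val l = low B j & B l j != 0.
Proof.
case/existsP=> i hi.
have nonempty : (0 < #|[pred i | B i j != 0%R]|)%N by apply/card_gt0P; exists i.
have [l nzl maxl] := eq_bigmax_cond (fun i : 'I_n => nat_of_ord i) nonempty.
by exists l; rewrite // /low maxl.
Qed.

Lemma low_ltn B j : (low B j < n)%N.
Proof.
have n_gt0 : (0 < n)%N by apply: leq_ltn_trans (ltn_ord j).
apply: (@leq_ltn_trans n.-1); last by rewrite prednK.
by apply/bigmax_leqP => i _; rewrite -ltnS prednK.
Qed.

Lemma eq_col_low B C t : (forall i, B i t = C i t) -> low B t = low C t.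
Proof. by move=> eqBC; apply: eq_bigl => i; rewrite /= eqBC. Qed.

Lemma eq_col_homogeneous B C t :
  (forall i, B i t = C i t) -> homogeneous lab B t = homogeneous lab C t.
Proof.
move=> eqBC; rewrite /homogeneous (eq_col_low eqBC).
by congr (_ && _); apply: eq_existsb => i; rewrite eqBC.
Qed.

Definition filtered_col B j :=
  forall i, B i j != 0 -> (i < j)%N && leP (lab i) (lab j).

Definition pivot B j s :=
  [&& (s < j)%N, homogeneous lab B s & leP (lab s) (lab j)].

Definition pivot_combination A B j := exists c : 'I_n -> 'F_2,
  forall i, B i j = A i j + \sum_(s | pivot B j s) c s * B i s.

Definition reduced_from (m : nat) B j :=
  forall i, (m <= i)%N -> B i j != 0 -> forall s, pivot B j s -> low B s != i.

Definition reduction A F :=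
  (forall j, filtered_col F j) /\
  (forall j, pivot_combination A F j /\ reduced_from 0 F j).

Lemma eq_pivot B C j : (forall t, (t < j)%N -> forall i, B i t = C i t) ->
  pivot B j =1 pivot C j.
Proof.
move=> eqBC s; rewrite /pivot; case: ltnP => //= ltsj.
by rewrite (eq_col_homogeneous (eqBC s ltsj)).
Qed.

Lemma eq_pivot_combination A B C j :
    (forall t, (t <= j)%N -> forall i, B i t = C i t) ->
  pivot_combination A B j -> pivot_combination A C j.
Proof.
move=> eqBC [c combB]; exists c => i.
rewrite -eqBC // combB; congr (_ + _); apply: eq_big => [s|s /andP[ltsj _]].
  by rewrite (eq_pivot (fun t ltt => eqBC t (ltnW ltt))).
by rewrite eqBC // ltnW.
Qed.

Lemma eq_reduced_from m B C j :
    (forall t, (t <= j)%N -> forall i, B i t = C i t) ->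
  reduced_from m B j -> reduced_from m C j.
Proof.
move=> eqBC redB i lemi; rewrite -eqBC // => nzij s.
rewrite -(eq_pivot (fun t ltt => eqBC t (ltnW ltt))) => pivs.
have /andP[ltsj _] := pivs.
by rewrite -(eq_col_low (eqBC s (ltnW ltsj))); apply: redB.
Qed.

Lemma addcol_pivot_combination A B j s :
  pivot B j s -> pivot_combination A B j -> pivot_combination A (addcol B s j) j.
Proof.
move=> pivs [c combB].
have eqcols t : (t < j)%N -> forall i, B i t = addcol B s j i t.
  by move=> ltt i; rewrite mxE ifN // -val_eqE /= ltn_eqF.
exists (fun t => c t + (t == s)%:R) => i.
under eq_bigl do rewrite -(eq_pivot eqcols).
under eq_bigr => t /andP[ltt _] do rewrite -eqcols // mulrDl.
rewrite big_split /=.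
have -> : \sum_(t | pivot B j t) (t == s)%:R * B i t = B i s.
  rewrite (bigD1 s) //= eqxx mul1r big1 ?addr0 // => t /andP[_ /negbTE->].
  by rewrite mul0r.
by rewrite mxE eqxx combB addrA.
Qed.

Hypothesis leP_trans : transitive leP.

(* The state of ConMat on column j once rows m and above have been processed,
   B being the matrix before column j. *)
Definition col_invariant B B' j m :=
  [/\ forall t, t != j -> forall i, B' i t = B i t,
      pivot_combination B B' j, filtered_col B' j & reduced_from m B' j].

Lemma addcol_invariant B B' j i0 s : (forall t, filtered_col B t) ->
    col_invariant B B' j i0.+1 -> B' i0 j != 0 ->
    (s < j)%N -> homogeneous lab B' s -> low B' s = i0 ->
  col_invariant B (addcol B' s j) j i0.
Proof.
move=> filtB [eqcols comb filt red] nz0 ltsj homs lows.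
have eq_other t : (t < j)%N -> forall i, addcol B' s j i t = B' i t.
  by move=> ltt i; rewrite mxE ifN // -val_eqE /= ltn_eqF.
have pivs : pivot B' j s.
  rewrite /pivot ltsj homs; case/andP: homs => _ /eqP->.
  by rewrite lows; case/andP: (filt i0 nz0).
have zs i : (i0 < i)%N -> B' i s = 0.
  by move=> lti; apply: contraTeq lti => /leq_low; rewrite lows leqNgt.
split.
- by move=> t ntj i; rewrite mxE (negbTE ntj); apply: eqcols.
- exact: addcol_pivot_combination.
- move=> i; rewrite mxE eqxx.
  have [z|nz] := eqVneq (B' i j) 0; last by move=> _; apply: filt.
  have nsj : s != j by rewrite -val_eqE /= ltn_eqF.
  rewrite z add0r eqcols // => /filtB /andP[ltis le_is].
  case/and3P: pivs => _ _ le_sj.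
  by rewrite (ltn_trans ltis ltsj) (leP_trans le_is le_sj).
move=> i; rewrite leq_eqVlt => /orP[/eqP/val_inj<-|lti] + t.
  rewrite mxE eqxx; have [l lowl nzl] := nzcol_low (proj1 (andP homs)).
  rewrite (_ : l = i0) in nzl; last by apply/val_inj; rewrite lowl lows.
  by rewrite (F2_eq1 nz0) (F2_eq1 nzl).
rewrite mxE eqxx zs // addr0 (eq_pivot eq_other) => nzi pivt.
have /andP[lttj _] := pivt.
by rewrite (eq_col_low (eq_other t lttj)); apply: red.
Qed.

Lemma step_invariant B B' j i0 : (forall t, filtered_col B t) ->
  col_invariant B B' j i0.+1 -> col_invariant B (step lab B' j i0) j i0.
Proof.
move=> filtB inv; have [eqcols comb filt red] := inv.
have red_i0 : (B' i0 j != 0 -> forall s, pivot B' j s -> low B' s != i0) ->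
    col_invariant B B' j i0.
  move=> nopiv; split=> // i; rewrite leq_eqVlt => /orP[/eqP/val_inj<-|]; last exact: red.
  exact: nopiv.
rewrite /step; case: ifPn => [nz0|/negPn/eqP z0]; last by apply: red_i0; rewrite z0 eqxx.
case: pickP => [s /andP[/andP[ltsj homs] /eqP lows] | nopick].
  exact: addcol_invariant.
apply: red_i0 => _ s /and3P[ltsj homs _].
by have := nopick s; rewrite /= ltsj homs => /negbT.
Qed.

Lemma foldr_step_invariant B j r m : (forall t, filtered_col B t) ->
    map val r = iota m (size r) -> col_invariant B B j (m + size r) ->
  col_invariant B (foldr (fun i B' => step lab B' j i) B r) j m.
Proof.
move=> filtB; elim: r m => [|i r IHr] m /=; first by rewrite addn0.
case=> <- valr inv; apply: step_invariant => //.
by apply: IHr => //; rewrite addSnnS.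
Qed.

Lemma process_col_invariant B j : (forall t, filtered_col B t) ->
  col_invariant B (process_col lab B j) j 0.
Proof.
move=> filtB; rewrite /process_col foldl_rev.
set r := [seq i <- enum 'I_n | _].
have valr : map val r = iota 0 (low B j).+1.
  by rewrite -(filter_map val (fun k => k <= low B j)%N) val_enum_ord filter_iota_leq ?low_ltn.
have sizer : size r = (low B j).+1 by rewrite -(size_map val) valr size_iota.
apply: foldr_step_invariant; rewrite ?sizer //; split=> //.
  by exists (fun=> 0) => i; rewrite big1 ?addr0 // => s _; rewrite mul0r.
by move=> i /= ltli /leq_low; rewrite leqNgt ltli.
Qed.

Definition conmat_invariant A B k :=
  [/\ forall j, (k <= j)%N -> forall i, B i j = A i j,
      forall t, filtered_col B t &
      forall j, (j < k)%N -> pivot_combination A B j /\ reduced_from 0 B j].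

Lemma process_col_conmat_invariant A B j :
  conmat_invariant A B j -> conmat_invariant A (process_col lab B j) j.+1.
Proof.
case=> eqA filtB done_cols.
have [eqcols comb filt red] := process_col_invariant j filtB.
set B' := process_col lab B j in eqcols comb filt red *.
have eq_upto (u : 'I_n) : (u < j)%N ->
    forall t, (t <= u)%N -> forall i, B i t = B' i t.
  by move=> ltuj t letu i; rewrite eqcols // -val_eqE /= ltn_eqF // (leq_ltn_trans letu).
split.
- move=> u ltju i; rewrite eqcols ?eqA 1?ltnW //.
  by rewrite -val_eqE /= gtn_eqF.
- by move=> t; have [->|ntj] := eqVneq t j; last by move=> i; rewrite eqcols //; apply: filtB.
move=> u; rewrite ltnS leq_eqVlt => /orP[/eqP/val_inj->|ltuj].
  split=> //; have [c combB'] := comb.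
  by exists c => i; rewrite combB' eqA.
have [combB redB] := done_cols u ltuj.
by split; [apply: eq_pivot_combination combB | apply: eq_reduced_from redB]; apply: eq_upto.
Qed.

Lemma foldl_process_col_invariant A B r k :
    conmat_invariant A B k -> map val r = iota k (size r) ->
  conmat_invariant A (foldl (process_col lab) B r) (k + size r).
Proof.
elim: r B k => [|j r IHr] B k /=; first by rewrite addn0.
move=> inv [valj valr]; rewrite -addSnnS; apply: IHr => //.
by rewrite -valj; apply: process_col_conmat_invariant; rewrite valj.
Qed.

Lemma conmat_full_reduction A : (forall t, filtered_col A t) -> reduction A (conmat_full lab A).
Proof.
move=> filtA.
have inv0 : conmat_invariant A A 0 by split.
have := foldl_process_col_invariant (r := enum 'I_n) inv0.
rewrite val_enum_ord size_enum_ord add0n => /(_ erefl)[_ filt done_cols].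
by split=> // j; apply: done_cols.
Qed.

Hypothesis leP_refl : reflexive leP.

Lemma reduced_low_neq F s t : reduced_from 0 F t -> (s < t)%N ->
  homogeneous lab F s -> homogeneous lab F t -> low F s != low F t.
Proof.
move=> redt ltst homs homt; apply/eqP => eqlow.
have [l lowl nzl] := nzcol_low (proj1 (andP homt)).
have pivs : pivot F t s.
  rewrite /pivot ltst homs.
  by move: homs homt => /andP[_ /eqP->] /andP[_ /eqP->]; rewrite eqlow leP_refl.
by move: (redt l isT nzl s pivs); rewrite eqlow lowl eqxx.
Qed.

Lemma pivot_sum_neq0 F j (e : 'I_n -> 'F_2) : (forall t, reduced_from 0 F t) ->
    (exists s, pivot F j s && (e s != 0)) ->
  exists2 s, pivot F j s &
    exists2 l : 'I_n, val l = low F s & \sum_(t | pivot F j t) e t * F l t != 0.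
Proof.
move=> red [s0 supp_s0].
have [s /andP[pivs nzes] maxs] :=
  @arg_maxnP _ s0 [pred s | pivot F j s && (e s != 0)] (low F) supp_s0.
have homs : homogeneous lab F s by case/and3P: pivs.
have [l lowl nzl] := nzcol_low (proj1 (andP homs)).
exists s => //; exists l => //.
rewrite (bigD1 s) //= big1 ?addr0 ?(F2_eq1 nzes) ?(F2_eq1 nzl) //.
move=> t /andP[pivt nts]; have [->|nzet] := eqVneq (e t) 0; first by rewrite mul0r.
have homt : homogeneous lab F t by case/and3P: pivt.
have le_low : (low F t <= low F s)%N by apply: maxs; rewrite /= pivt nzet.
have neq_low : low F t != low F s.
  case: (ltngtP t s) => [ltts|ltst|eqts]; last by rewrite (val_inj eqts) eqxx in nts.
    exact: reduced_low_neq.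
  by rewrite eq_sym; apply: reduced_low_neq.
suff -> : F l t = 0 by rewrite mulr0.
apply: contraNeq neq_low => /leq_low; rewrite lowl => le_st.
by rewrite eqn_leq le_low le_st.
Qed.

Lemma reduction_unique A F G : reduction A F -> reduction A G -> F = G.
Proof.
move=> [_ redF] [_ redG].
suff eq_upto k : forall j, (j < k)%N -> forall i, F i j = G i j.
  by apply/matrixP => i j; apply: (eq_upto j.+1).
elim: k => // k IHk j; rewrite ltnS leq_eqVlt => /orP[/eqP eqjk|]; last exact: IHk.
have eq_before t : (t < j)%N -> forall i, F i t = G i t.
  by move=> ltt; apply: IHk; rewrite -eqjk.
have eq_piv : pivot F j =1 pivot G j by apply: eq_pivot.
have [[c combF] redFj] := redF j; have [[d combG] redGj] := redG j.
have {}combG i : G i j = A i j + \sum_(u | pivot F j u) d u * F i u.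
  rewrite combG; congr (_ + _); apply: eq_big => [u|u /andP[ltu _]]; first by rewrite eq_piv.
  by rewrite eq_before.
(* Otherwise column j of F - G is a nonzero combination of pivots; it is nonzero
   at the low of one of them, which contradicts the reducedness of F or of G. *)
have eq_coef s : pivot F j s -> c s = d s.
  apply: contraTeq => neqcd; apply/negP => pivs.
  have [t pivt [l lowl]] : exists2 t, pivot F j t &
      exists2 l : 'I_n, val l = low F t & \sum_(u | pivot F j u) (c u - d u) * F l u != 0.
    by apply: pivot_sum_neq0; [move=> u; case: (redF u) | exists s; rewrite pivs subr_eq0].
  have -> : \sum_(u | pivot F j u) (c u - d u) * F l u = F l j - G l j.
    by under eq_bigr do rewrite mulrBl; rewrite sumrB combF combG opprD addrACA subrr add0r.
  have [zF|nzF] := eqVneq (F l j) 0; last first.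
    by move: (redFj l isT nzF t pivt); rewrite lowl eqxx.
  rewrite zF sub0r oppr_eq0 => nzG.
  have /andP[ltt _] := pivt.
  move: (redGj l isT nzG t); rewrite -eq_piv -(eq_col_low (eq_before t ltt)) lowl eqxx.
  by move=> /(_ pivt).
move=> i; rewrite combF combG; congr (_ + _).
by apply: eq_bigr => u /eq_coef ->.
Qed.

Definition ordered_labels :=
  forall s j, leP (lab s) (lab j) -> lab s != lab j -> (s < j)%N.

Lemma homogeneousE B s : ordered_labels -> filtered_col B s ->
  homogeneous lab B s = [exists i, (B i s != 0) && (lab i == lab s)].
Proof.
move=> ordlab filt; apply/idP/existsP => [homs|[i /andP[nzi /eqP labi]]].
  have [l lowl nzl] := nzcol_low (proj1 (andP homs)).
  by exists l; case/andP: homs => _ /eqP->; rewrite nzl lowl eqxx.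
have nzs : nzcol B s by apply/existsP; exists i.
have [l lowl nzl] := nzcol_low nzs.
rewrite /homogeneous nzs -lowl eq_sym; apply: contraTT (leq_low nzi) => neq_l.
rewrite -ltnNge -lowl; apply: ordlab; rewrite ?labi //.
by case/andP: (filt l nzl).
Qed.

End Reduction.

Lemma perm_conj_submx n n' (J : {set 'I_n}) (J' : {set 'I_n'})
    (pi : 'I_n -> 'I_n') (pinv : 'I_n' -> 'I_n) (F : 'M['F_2]_n) (F' : 'M['F_2]_n') :
    cancel pi pinv -> cancel pinv pi -> (forall i, (i \in J) = (pi i \in J')) ->
    (forall i j, F i j = F' (pi i) (pi j)) ->
  exists R : 'M['F_2]_(#|J|, #|J'|), perm_matrix R /\
    R^T *m (\matrix_(a, b) F (enum_val a) (enum_val b)) *m R =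
    \matrix_(a, b) F' (enum_val a) (enum_val b).
Proof.
move=> piK pinvK memJ eqF.
have pinvJ (b : 'I_#|J'|) : pinv (enum_val b) \in J by rewrite memJ pinvK enum_valP.
have piJ' (a : 'I_#|J|) : pi (enum_val a) \in J' by rewrite -memJ enum_valP.
pose rk b := enum_rank_in (pinvJ b) (pinv (enum_val b)).
have rkK b : enum_val (rk b) = pinv (enum_val b) by rewrite enum_rankK_in.
have eq_rk a b : (pi (enum_val a) == enum_val b) = (a == rk b).
  apply/eqP/eqP => [eq_ab|->]; last by rewrite rkK pinvK.
  by apply: enum_val_inj; rewrite rkK -eq_ab piK.
pose R : 'M['F_2]_(#|J|, #|J'|) := \matrix_(a, b) (a == rk b)%:R.
have nzR a b : (R a b != 0) = (a == rk b) by rewrite mxE; case: (a == rk b).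
have sumR b (X : 'I_#|J| -> 'F_2) : \sum_a (a == rk b)%:R * X a = X (rk b).
  rewrite (bigD1 (rk b)) //= big1 ?addr0 => [|a /negbTE neq_a]; first by rewrite eqxx mul1r.
  by rewrite neq_a mul0r.
exists R; split.
  apply/andP; split; [apply/forallP => a | apply/forallP => b]; apply/eqP; last first.
    rewrite (_ : [set a | R a b != 0] = [set rk b]) ?cards1 //.
    by apply/setP => a; rewrite !inE nzR.
  pose b0 := enum_rank_in (piJ' a) (pi (enum_val a)).
  rewrite (_ : [set b | R a b != 0] = [set b0]) ?cards1 //.
  apply/setP => b; rewrite !inE nzR -eq_rk -(inj_eq enum_val_inj).
  by rewrite (enum_rankK_in _ (piJ' a)) // eq_sym.
apply/matrixP => b b'; rewrite !mxE.
under eq_bigr do rewrite !mxE mulrC; rewrite sumR.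
under eq_bigr do rewrite !mxE; rewrite sumR.
by rewrite !rkK eqF !pinvK.
Qed.

Section Transport.
Variables (P : eqType) (leP : rel P) (n n' : nat) (lab lab' : nat -> P).
Variables (pi : 'I_n -> 'I_n') (pinv : 'I_n' -> 'I_n).
Hypotheses (piK : cancel pi pinv) (pinvK : cancel pinv pi).
Hypothesis lab_pi : forall i, lab' (pi i) = lab i.
Implicit Types (i j s t : 'I_n) (M : 'M['F_2]_n').
Hypothesis ltn_pi_lab : forall i j, lab i = lab j -> (pi i < pi j)%N = (i < j)%N.
Hypotheses (ordlab : ordered_labels leP n lab) (ordlab' : ordered_labels leP n' lab').

Definition transport (M : 'M['F_2]_n') : 'M['F_2]_n := \matrix_(i, j) M (pi i) (pi j).

Lemma ltn_pi s j : leP (lab s) (lab j) -> (pi s < pi j)%N = (s < j)%N.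
Proof.
move=> le_sj; have [eqlab|neqlab] := eqVneq (lab s) (lab j); first exact: ltn_pi_lab.
by rewrite ordlab // ordlab' ?lab_pi.
Qed.

Lemma filtered_transport M t :
  filtered_col leP lab' M (pi t) -> filtered_col leP lab (transport M) t.
Proof.
move=> filt i; rewrite mxE => /filt; rewrite !lab_pi => /andP[ltpi le_it].
by rewrite -ltn_pi // ltpi.
Qed.

Lemma homogeneous_transport M s : filtered_col leP lab' M (pi s) ->
  homogeneous lab (transport M) s = homogeneous lab' M (pi s).
Proof.
move=> filt.
rewrite (homogeneousE ordlab (filtered_transport filt)) (homogeneousE ordlab' filt).
apply/existsP/existsP => [[i nzi]|[i' nzi']].
  by exists (pi i); move: nzi; rewrite mxE !lab_pi.
by exists (pinv i'); rewrite mxE -!lab_pi pinvK.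
Qed.

Lemma leq_pi_lab i j : lab i = lab j -> (pi i <= pi j)%N = (i <= j)%N.
Proof. by move=> eqlab; rewrite leqNgt ltn_pi_lab // -leqNgt. Qed.

Lemma low_transport M s (l : 'I_n) : filtered_col leP lab' M (pi s) ->
  homogeneous lab (transport M) s -> val l = low (transport M) s -> low M (pi s) = pi l.
Proof.
move=> filt homs lowl; have homs' := homs; rewrite homogeneous_transport // in homs'.
have [l' lowl' nzl'] := nzcol_low (proj1 (andP homs')).
have nzl : transport M l s != 0.
  have [l2 lowl2 nzl2] := nzcol_low (proj1 (andP homs)).
  by rewrite (_ : l = l2) //; apply/val_inj; rewrite lowl lowl2.
have lab_l : lab l = lab s by case/andP: homs => _ /eqP->; rewrite lowl.
have lab_l' : lab (pinv l') = lab l.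
  by rewrite -lab_pi pinvK lab_l; case/andP: homs' => _ /eqP; rewrite -lowl' lab_pi => ->.
apply/eqP; rewrite eqn_leq; apply/andP; split.
  rewrite -lowl' -(pinvK l') leq_pi_lab // lowl leq_low //.
  by rewrite mxE pinvK.
by apply: leq_low; rewrite mxE in nzl.
Qed.

Hypotheses (leP_refl : reflexive leP) (leP_trans : transitive leP).

Lemma pivot_transport M j s : (forall t : 'I_n', filtered_col leP lab' M t) ->
  pivot leP lab (transport M) j s = pivot leP lab' M (pi j) (pi s).
Proof.
move=> filt; rewrite /pivot !lab_pi homogeneous_transport //.
by case: leP (@ltn_pi s j) => [->|_] //; rewrite !andbF.
Qed.

Lemma reduction_transport A F : reduction leP lab' A F ->
  reduction leP lab (transport A) (transport F).
Proof.
move=> [filt redF]; split=> [t|j]; first exact: filtered_transport.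
have [[c comb] red] := redF (pi j); split.
  exists (c \o pi) => i; rewrite mxE comb mxE; congr (_ + _).
  rewrite (reindex pi); last by exists pinv => ? _; [apply: piK | apply: pinvK].
  by apply: eq_big => [s|s _]; rewrite ?pivot_transport // mxE.
move=> i _ nzi s; rewrite pivot_transport // => pivs.
have homs : homogeneous lab (transport F) s.
  by rewrite homogeneous_transport //; case/and3P: pivs.
have [l lowl _] := nzcol_low (proj1 (andP homs)).
rewrite mxE in nzi; have := red (pi i) isT nzi (pi s) pivs.
by rewrite (low_transport _ homs lowl) // -lowl; apply: contra_neq => /val_inj->.
Qed.

Lemma conmat_full_transport A : (forall t : 'I_n', filtered_col leP lab' A t) ->
  conmat_full lab (transport A) = transport (conmat_full lab' A).
Proof.
move=> filtA; have filtA_pi t := filtered_transport (filtA (pi t)).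
apply: (reduction_unique leP_refl (conmat_full_reduction leP_trans filtA_pi)).
exact/reduction_transport/conmat_full_reduction.
Qed.

Lemma targetable_transport F i : (forall t : 'I_n', filtered_col leP lab' F t) ->
  targetable lab (transport F) i = targetable lab' F (pi i).
Proof.
move=> filt; apply/existsP/existsP => [[j /andP[homj /eqP lowj]]|[j' /andP[homj' /eqP lowj']]].
  exists (pi j); rewrite -homogeneous_transport // homj /=.
  by rewrite (low_transport _ homj (esym lowj)).
have homj : homogeneous lab (transport F) (pinv j') by rewrite homogeneous_transport pinvK.
exists (pinv j'); rewrite homj /=.
have [l lowl _] := nzcol_low (proj1 (andP homj)).
move: (low_transport (filt _) homj lowl); rewrite pinvK lowj' => /val_inj eqil.
by rewrite -lowl -(piK l) -eqil piK.
Qed.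

Lemma conmat_J_transport A i : (forall t : 'I_n', filtered_col leP lab' A t) ->
  (i \in conmat_J lab (transport A)) = (pi i \in conmat_J lab' A).
Proof.
move=> filtA; have filtF := proj1 (conmat_full_reduction leP_trans filtA).
rewrite !inE conmat_full_transport // homogeneous_transport //.
by rewrite targetable_transport.
Qed.

Lemma conmat_transport_perm A : (forall t : 'I_n', filtered_col leP lab' A t) ->
  exists R, perm_matrix R /\ R^T *m conmat lab (transport A) *m R = conmat lab' A.
Proof.
move=> filtA; apply: (perm_conj_submx piK pinvK) => [i|i j].
  by rewrite conmat_J_transport.
by rewrite conmat_full_transport // mxE.
Qed.

End Transport.

Lemma ltn_index_filter (T : eqType) (a : pred T) (x y : T) (s : seq T) : a x -> a y ->
  (index x (filter a s) < index y (filter a s))%N = (index x s < index y s)%N.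
Proof.
move=> ax ay; elim: s => //= z s IHs.
have [ezx|nzx] := eqVneq z x; first by subst x; rewrite ax /= eqxx; case: (z == y).
have [ezy|nzy] := eqVneq z y; first by subst y; rewrite ay /= eqxx (negbTE nzx).
by case: (a z) => /=; rewrite ?(negbTE nzx) ?(negbTE nzy) /= ?ltnS.
Qed.

Lemma uniq_reindex_ord (T : eqType) (x0 : T) (s s' : seq T) :
    uniq s -> uniq s' -> s =i s' ->
  exists pi : 'I_(size s) -> 'I_(size s'), exists pinv,
    [/\ cancel pi pinv, cancel pinv pi & forall i, nth x0 s' (pi i) = nth x0 s i].
Proof.
move=> uniq_s uniq_s' eq_ss'.
have lt_pi (i : 'I_(size s)) : (index (nth x0 s i) s' < size s')%N.
  by rewrite index_mem -eq_ss' mem_nth.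
have lt_pinv (i : 'I_(size s')) : (index (nth x0 s' i) s < size s)%N.
  by rewrite index_mem eq_ss' mem_nth.
have nth_pi i : nth x0 s' (Ordinal (lt_pi i)) = nth x0 s i.
  by rewrite nth_index // -eq_ss' mem_nth.
have nth_pinv i : nth x0 s (Ordinal (lt_pinv i)) = nth x0 s' i.
  by rewrite nth_index // eq_ss' mem_nth.
exists (fun i => Ordinal (lt_pi i)), (fun i => Ordinal (lt_pinv i)); split=> // i.
  by apply/val_inj; rewrite /= nth_pi index_uniq.
by apply/val_inj; rewrite /= nth_pinv index_uniq.
Qed.

Section Enumerations.
Variables (V : finType) (K : {set {set V}}) (P : finType) (leP : rel P).
Variable mset : {set V} -> P.

Lemma bdry_mx_filtered mvf s : morse_decomposition K mvf leP mset ->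
  admissible K leP mset s -> forall t, filtered_col leP (labels mset s) (bdry_mx s) t.
Proof.
move=> [_ morse_paths] [[_ mem_s] [_ faces_first]] t i; rewrite mxE.
case: ifP => [/andP[sub_it /eqP card_t] _|]; last by rewrite eqxx.
rewrite faces_first ?ltn_ord ?properEcard ?sub_it ?card_t ?ltnSn //=.
apply: (morse_paths _ [:: nth set0 s i]); split; first by rewrite /= -!mem_s !mem_nth.
by rewrite /= andbT /Fmv in_setU /cl inE -mem_s mem_nth //= sub_it orbT.
Qed.

Lemma admissible_ordered_labels s :
  admissible K leP mset s -> ordered_labels leP (size s) (labels mset s).
Proof.
move=> [_ [[lin [[[_ [lin_anti _]] [_ le_lin]] lin_sorted]] _]] i j le_ij.
apply: contra_neqT; rewrite -leqNgt => le_ji.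
by apply: lin_anti; rewrite le_lin // lin_sorted.
Qed.

Lemma morse_fixed_ltn s s' (i j : 'I_(size s)) (i' j' : 'I_(size s')) :
    uniq s -> uniq s' -> morse_fixed mset s s' ->
    nth set0 s' i' = nth set0 s i -> nth set0 s' j' = nth set0 s j ->
  mset (nth set0 s i) = mset (nth set0 s j) -> (i' < j')%N = (i < j)%N.
Proof.
move=> uniq_s uniq_s' fixed nth_i nth_j eq_mset.
pose a x := mset x == mset (nth set0 s i).
have in_i : a (nth set0 s i) by rewrite /a eqxx.
have in_j : a (nth set0 s j) by rewrite /a eq_mset.
have ord_index (s0 : seq {set V}) (k : 'I_(size s0)) :
  uniq s0 -> val k = index (nth set0 s0 k) s0 by move=> uniq_s0; rewrite index_uniq.
rewrite (ord_index _ i') // (ord_index _ j') // (ord_index _ i) // (ord_index _ j) //.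
rewrite nth_i nth_j.
rewrite -(@ltn_index_filter _ a _ _ s in_i in_j).
by rewrite -(@ltn_index_filter _ a _ _ s' in_i in_j) /a fixed.
Qed.

End Enumerations.

Theorem corollary1 (V : finType) (K : {set {set V}}) (mvf : {set {set {set V}}})
    (P : finType) (leP : rel P) (mset : {set V} -> P) (s s' : seq {set V}) :
  simplicial_complex K ->
  multivector_field K mvf ->
  morse_decomposition K mvf leP mset ->
  admissible K leP mset s ->
  admissible K leP mset s' ->
  morse_fixed mset s s' ->
  let S := conmat (labels mset s) (bdry_mx s) in
  let S' := conmat (labels mset s') (bdry_mx s') in
  exists R, perm_matrix R /\ R^T *m S *m R = S'.
Proof.
move=> _ _ mdec adm adm' fixed S S'.
have [[[uniq_s mem_s] _] [[uniq_s' mem_s'] _]] := (adm, adm').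
have [[leP_refl [_ leP_trans]] _] := mdec.
have mem_ss' : s =i s' by move=> x; rewrite mem_s mem_s'.
have [pi [pinv [piK pinvK nth_pi]]] := uniq_reindex_ord set0 uniq_s uniq_s' mem_ss'.
have bdry_pi : bdry_mx s = transport pi (bdry_mx s').
  by apply/matrixP => i j; rewrite !mxE !nth_pi.
rewrite /S; move: (bdry_mx s) bdry_pi => A ->.
apply: (conmat_transport_perm piK pinvK) => //.
- by move=> i; rewrite /labels /= nth_pi.
- by move=> i j; apply: morse_fixed_ltn.
- exact: admissible_ordered_labels adm.
- exact: admissible_ordered_labels adm'.
- exact: bdry_mx_filtered mdec adm'.
Qed.
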